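(* For real $\omega$ and $k\in\mathbb{Z}_+$ let $\mu_k(\omega)=\int_{-1}^1 x^k{\mathrm e}^{{\mathrm i}\omega x}\,\mathrm{d}x$, and for $n\geq 0$ let $h_n(\omega)=\det[\mu_{i+j}(\omega)]_{i,j=0}^{n}$ be the $(n+1)\times(n+1)$ Hankel determinant. Then there is no $n\geq 1$ and $\omega^*>0$ such that $h_{n-1}(\omega^* )=h_n(\omega^* )=0$. *)

From HB Require Import structures.
From mathcomp Require Import all_boot all_order all_algebra.
From mathcomp Require Import all_classical all_reals all_analysis.
From mathcomp Require Import complex.
Set Implicit Arguments. Unset Strict Implicit. Unset Printing Implicit Defensive.
Import Order.TTheory GRing.Theory Num.Theory.
Local Open Scope ring_scope.
Local Open Scope classical_set_scope.

(* mu_k(w) = \int_{-1}^1 x^k e^{i w x} dx, with e^{i w x} = cos(w x) + i sin(w x);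
   the (Lebesgue) integral of the complex integrand is taken componentwise. *)
Definition moment (R : realType) (k : nat) (w : R) : R[i] :=
  Complex (Rintegral (@lebesgue_measure R) `[-1%R, 1%R] (fun x => x ^+ k * cos (w * x)))
          (Rintegral (@lebesgue_measure R) `[-1%R, 1%R] (fun x => x ^+ k * sin (w * x))).

Definition hankel_det (R : realType) (n : nat) (w : R) : R[i] :=
  \det (\matrix_(i < n.+1, j < n.+1) moment (i + j)%N w).

(* Let L p = sum_i p_i mu_i be the moment functional (momf).  Integration by parts gives
   i w mu_k + k mu_(k-1) = e^(iw) - (-1)^k e^(-iw), that is
   L (F' + i w F) = e^(iw) F(1) - e^(-iw) F(-1), which vanishes for F = (x^2 - 1) G.
   A zero Hankel determinant h_k yields a nonzero A of degree at most k with L (A x^j) = 0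
   for all j <= k.  Taking G = x^e A^2 shows that if deg A < k, or if also L (A x^k) = 0,
   then A is orthogonal to every polynomial, which the boundary terms forbid; so deg A = k and
   L (A x^k) <> 0.  If moreover h_(k+1) = 0 with witness B, the remainder of B modulo A is a
   nonzero witness of the same kind for h_(k-1), and descending to h_0 is absurd. *)

From HB Require Import structures.
From mathcomp Require Import all_boot all_order all_algebra.
From mathcomp Require Import all_classical all_reals all_analysis.
From mathcomp Require Import complex zify.
From mathcomp.algebra_tactics Require Import ring lra.
Set Implicit Arguments. Unset Strict Implicit. Unset Printing Implicit Defensive.
Import Order.TTheory GRing.Theory Num.Theory numFieldNormedType.Exports.
Local Open Scope ring_scope.

Lemma size_deriv_leq (R : nzSemiRingType) (p : {poly R}) : (size p^`() <= (size p).-1)%N.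
Proof.
have [->|p0] := eqVneq p 0; first by rewrite deriv0 size_poly0.
by have := lt_size_deriv p0; case: (size p).
Qed.

Lemma size_mul_le (R : nzSemiRingType) (p q : {poly R}) m n :
  (size p <= m)%N -> (size q <= n)%N -> (size (p * q)%R <= (m + n).-1)%N.
Proof. by move=> sp sq; apply: leq_trans (size_polyMleq p q) _; lia. Qed.

Lemma size_polyD_le (R : nzSemiRingType) (p q : {poly R}) n :
  (size p <= n)%N -> (size q <= n)%N -> (size (p + q)%R <= n)%N.
Proof. by move=> sp sq; rewrite (leq_trans (size_polyD p q)) // geq_max sp. Qed.

Lemma deriv_eq0_polyC (R : numDomainType) (p : {poly R}) :
  p^`() = 0 -> p = (p`_0)%:P.
Proof.
move=> p'0; apply: size1_polyC; apply/leq_sizeP => -[//|j] _.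
by have := coef_deriv p j; rewrite p'0 coef0 => /esym/eqP; rewrite mulrn_eq0 => /eqP.
Qed.

Section MomentFunctional.
Variables (K : numFieldType) (mu : nat -> K).

Definition momf (p : {poly K}) : K := \sum_(i < size p) p`_i * mu i.

Lemma momf_widen N (p : {poly K}) :
  (size p <= N)%N -> momf p = \sum_(i < N) p`_i * mu i.
Proof.
move=> sp; rewrite /momf (big_ord_widen N (fun i => p`_i * mu i) sp).
rewrite [RHS](bigID (fun i : 'I_N => (i < size p)%N)) /= [X in _ = _ + X]big1 ?addr0 //.
by move=> i; rewrite -leqNgt => le_pi; rewrite nth_default ?mul0r.
Qed.

Lemma momf0 : momf 0 = 0.
Proof. by rewrite /momf size_poly0 big_ord0. Qed.

Lemma momfD (p q : {poly K}) : momf (p + q) = momf p + momf q.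
Proof.
pose N := maxn (size p) (size q).
rewrite (@momf_widen N) ?size_polyD // (@momf_widen N p) ?leq_maxl //.
rewrite (@momf_widen N q) ?leq_maxr // -big_split /=.
by apply: eq_bigr => i _; rewrite coefD mulrDl.
Qed.

Lemma momfZ c (p : {poly K}) : momf (c *: p) = c * momf p.
Proof.
rewrite (@momf_widen (size p)) ?size_scale_leq // /momf mulr_sumr.
by apply: eq_bigr => i _; rewrite coefZ mulrA.
Qed.

Definition orth_upto (A : {poly K}) n :=
  forall g : {poly K}, (size g <= n)%N -> momf (A * g) = 0.

Lemma momf_mul_orth_upto (A g : {poly K}) n : orth_upto A n ->
  (size g <= n.+1)%N -> momf (A * g) = g`_n * momf (A * 'X^n).
Proof.
move=> oA sg; rewrite -[in LHS](subrK (g`_n *: 'X^n) g) mulrDr momfD.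
rewrite -scalerAr momfZ oA ?add0r //; apply/leq_sizeP => j le_nj.
rewrite coefB coefZ coefXn; have [->|ne_jn] := eqVneq j n; first by rewrite mulr1 subrr.
by rewrite mulr0 subr0 nth_default // (leq_trans sg) // ltn_neqAle eq_sym ne_jn.
Qed.

Lemma orth_uptoS (A : {poly K}) n :
  orth_upto A n -> momf (A * 'X^n) = 0 -> orth_upto A n.+1.
Proof. by move=> oA An0 g sg; rewrite (momf_mul_orth_upto oA sg) An0 mulr0. Qed.

Lemma orth_upto_monomials (A : {poly K}) m :
  (forall n, (n < m)%N -> momf (A * 'X^n) = 0) -> orth_upto A m.
Proof.
elim: m => [_ g|m IHm AX0]; first by rewrite leqn0 size_poly_eq0 => /eqP->; rewrite mulr0 momf0.
by apply: orth_uptoS; [apply: IHm => n lt_nm; apply: AX0; lia | exact: AX0].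
Qed.

Section Division.
Variables (A B : {poly K}) (k : nat).
Hypotheses (sA : size A = k.+1) (oA : orth_upto A k.+1) (oB : orth_upto B k.+2).

Let A_neq0 : A != 0. Proof. by rewrite -size_poly_eq0 sA. Qed.

Let momf_modp g : momf (B %% A * g) = momf (B * g) - momf (A * (B %/ A * g)).
Proof. by rewrite [in B * g](divp_eq B A) mulrDl momfD -mulrA mulrCA addrC addKr. Qed.

Lemma orth_upto_modp : (size B <= k.+2)%N -> orth_upto (B %% A) k.
Proof.
move=> sB g sg; rewrite momf_modp oB; last by lia.
rewrite oA ?subrr //.
have sD : (size (B %/ A)%R <= 2)%N by rewrite size_divp // sA leq_subLR addn2.
by apply: leq_trans (size_mul_le sD sg) _; lia.
Qed.

Lemma modp_orth_upto_neq0 : size B = k.+2 ->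
  momf (A * 'X^(k.+1)) != 0 -> B %% A != 0.
Proof.
move=> sB nzA; apply: contra_neq nzA => modBA0.
have sD : size (B %/ A)%R = 2 by rewrite size_divp // sA sB; lia.
have := momf_modp 'X^k; rewrite modBA0 mul0r momf0 oB ?size_polyXn //.
rewrite (momf_mul_orth_upto oA); last first.
  by apply: leq_trans (size_mul_le (eq_leq sD) (eq_leq (size_polyXn _ _))) _.
rewrite coefMXn ltnNge leqnSn subSnn sub0r => /esym/eqP.
have -> : (B %/ A)`_1 = lead_coef (B %/ A) by rewrite lead_coefE sD.
by rewrite oppr_eq0 mulf_eq0 lead_coef_eq0 -size_poly_eq0 sD => /orP[|/eqP].
Qed.

End Division.

Definition hankel_mx k : 'M[K]_k.+1 := \matrix_(i, j) mu (i + j)%N.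

Lemma det_hankel_eq0 k : \det (hankel_mx k) = 0 ->
  exists A : {poly K}, [/\ A != 0, (size A <= k.+1)%N & orth_upto A k.+1].
Proof.
move/eqP/det0P => [v v_neq0 vH0]; pose A := \poly_(j < k.+1) v 0 (inord j).
have coefA (j : 'I_k.+1) : A`_j = v 0 j by rewrite coef_poly ltn_ord inord_val.
exists A; split; last 1 first.
- apply: orth_upto_monomials => n lt_nk.
  rewrite (@momf_widen (n + k.+1)); last first.
    by apply: leq_trans (size_mul_le (size_poly _ _) (eq_leq (size_polyXn _ _))) _; lia.
  rewrite big_split_ord /= big1 ?add0r => [|i _]; last by rewrite coefMXn ltn_ord mul0r.
  transitivity ((v *m hankel_mx k) 0 (Ordinal lt_nk)); last by rewrite vH0 mxE.
  rewrite mxE; apply: eq_bigr => j _.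
  by rewrite coefMXn ltnNge leq_addr addnC addnK coefA mxE addnC.
- apply: contraNneq v_neq0 => A0; apply/eqP/rowP => j.
  by rewrite -coefA A0 coef0 mxE.
- exact: size_poly.
Qed.

Section MomentRecurrence.
Variables (z E E' : K).
Hypothesis mu_rec : forall k, z * mu k + k%:R * mu k.-1 = E - (-1) ^+ k * E'.

Lemma momf_deriv_shift (F : {poly K}) :
  momf (F^`() + z *: F) = E * F.[1] - E' * F.[-1].
Proof.
set N := size F; have sF : (size F <= N.+1)%N by rewrite leqW.
rewrite (@momf_widen N.+1); last first.
  apply: size_polyD_le; last by rewrite (leq_trans (size_scale_leq _ _)).
  by rewrite (leq_trans (size_deriv_leq F)) // /N; lia.
rewrite !(horner_coef_wide _ sF) !mulr_sumr -sumrB.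
transitivity (\sum_(i < N.+1) F`_i * (z * mu i + i%:R * mu i.-1)); last first.
  by apply: eq_bigr => i _; rewrite mu_rec expr1n; ring.
under [RHS]eq_bigr do rewrite mulrDr.
rewrite big_split /= addrC; under eq_bigr do rewrite coefD coef_deriv coefZ mulrDl.
rewrite big_split /=; congr (_ + _); last by apply: eq_bigr => i _; ring.
rewrite big_ord_recr big_ord_recl /= mul0r mulr0 add0r.
rewrite [F`_N.+1]nth_default // mul0rn mul0r addr0.
by apply: eq_bigr => i _; rewrite /bump leq0n add1n add0n -mulr_natl; ring.
Qed.

Lemma momf_weighted_deriv (G : {poly K}) :
  momf ((('X^2 - 1) * G)^`() + z *: (('X^2 - 1) * G)) = 0.
Proof. by rewrite momf_deriv_shift !hornerE /= sqrrN expr1n subrr !mulr0 !mul0r subrr. Qed.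

Hypothesis z_neq0 : z != 0.

Lemma orth_upto_extend (A : {poly K}) N : A != 0 -> orth_upto A N ->
  (size A < N)%N -> momf (A * 'X^N) = 0.
Proof.
move=> A_neq0 oA ltAN; set s := size A; set e := (N - s.+1)%N.
have s_gt0 : (0 < s)%N by rewrite lt0n size_poly_eq0.
have sW : (size ('X^2 - 1 : {poly K})%R <= 3)%N by rewrite size_XnsubC.
pose G := 'X^e * A; pose Q := ('X^2 - 1) * G.
have sG : (size G <= e + s)%N.
  by apply: leq_trans (size_mul_le (eq_leq (size_polyXn _ _)) (leqnn s)) _.
(* Pearson identity for the weight (X^2 - 1) X^e A^2: all of it but the top term
   is A times a polynomial of size at most N. *)
pose B := Q^`() - z *: G + ('X^2 - 1) * ('X^e * A^`()).
have weightE : (Q * A)^`() + z *: (Q * A) = A * B + z *: (A * ('X^2 * G)).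
  by rewrite derivM /B /Q /G -!mul_polyC; ring.
have sB : (size B <= N)%N.
  have sQ : (size Q <= N.+1)%N by apply: leq_trans (size_mul_le sW sG) _; lia.
  have sA' : (size ('X^e * A^`())%R <= e + s.-1)%N.
    exact: leq_trans (size_mul_le (eq_leq (size_polyXn _ _)) (size_deriv_leq A)) _.
  apply: size_polyD_le; first apply: size_polyD_le.
  - by apply: leq_trans (size_deriv_leq _) _; lia.
  - by rewrite size_polyN (leq_trans (size_scale_leq _ _)) // (leq_trans sG) //; lia.
  - by apply: leq_trans (size_mul_le sW sA') _; lia.
have := momf_weighted_deriv (G * A); rewrite mulrA weightE momfD oA // add0r momfZ.
move=> /eqP; rewrite mulf_eq0 (negPf z_neq0) /= => /eqP.
rewrite (momf_mul_orth_upto oA); last first.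
  by apply: leq_trans (size_mul_le (eq_leq (size_polyXn _ _)) sG) _; lia.
rewrite /G mulrA -exprD coefXnM ltnNge.
have -> : (2 + e <= N)%N by lia.
have -> : (N - (2 + e) = s.-1)%N by lia.
by move=> /eqP; rewrite -lead_coefE mulf_eq0 lead_coef_eq0 (negPf A_neq0) => /eqP.
Qed.

Lemma orth_upto_all (A : {poly K}) N : A != 0 -> orth_upto A N ->
  (size A < N)%N -> forall g, momf (A * g) = 0.
Proof.
move=> A_neq0 oA ltAN g; suff oAN k : orth_upto A (N + k) by apply: oAN; apply: leq_addl.
elim: k => [|k IHk]; first by rewrite addn0.
rewrite addnS; apply: orth_uptoS IHk (orth_upto_extend A_neq0 IHk _).
exact: leq_trans ltAN (leq_addr _ _).
Qed.

Hypotheses (E_neq0 : E != 0) (E'_neq0 : E' != 0).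

Lemma momf_annihilator_eq0 (A : {poly K}) : (forall g, momf (A * g) = 0) -> A = 0.
Proof.
(* Induction on the size: once A(1) = A(-1) = 0, the derivative A' annihilates too. *)
move: {2}(size A) (leqnn (size A)) => n; elim: n A => [|n IHn] A sA annA.
  by apply/eqP; rewrite -size_poly_eq0 -leqn0.
have momf_derivA g : momf (A^`() * g) = E * A.[1] * g.[1] - E' * A.[-1] * g.[-1].
  have := momf_deriv_shift (A * g); rewrite !hornerM !mulrA => <-.
  by rewrite derivM scalerAr -addrA -mulrDr momfD annA addr0.
have endpointsA h : E * A.[1] * (A * h).[1] = E' * A.[-1] * (A * h).[-1].
  by apply/eqP; rewrite -subr_eq0 -momf_derivA mulrCA annA.
have two_neq0 : (1 + 1 : K) != 0 by rewrite -mulr2n pnatr_eq0.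
have A1 : A.[1] = 0.
  have := endpointsA ('X + 1); rewrite !hornerE /= addNr mulr0 => /eqP.
  by rewrite !mulf_eq0 (negPf E_neq0) (negPf two_neq0) orbF orbb => /eqP.
have Am1 : A.[-1] = 0.
  have := endpointsA ('X - 1); rewrite !hornerE /= subrr mulr0 => /esym/eqP.
  by rewrite !mulf_eq0 (negPf E'_neq0) -opprD oppr_eq0 (negPf two_neq0) orbF orbb => /eqP.
have A'0 : A^`() = 0.
  apply: IHn => [|g]; last by rewrite momf_derivA A1 Am1 !mulr0 !mul0r subrr.
  by apply: leq_trans (size_deriv_leq A) _; lia.
by move: A1; rewrite (deriv_eq0_polyC A'0) hornerC => ->.
Qed.

Lemma orth_upto_size (A : {poly K}) N : A != 0 -> orth_upto A N -> (N <= size A)%N.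
Proof.
move=> A_neq0 oA; rewrite leqNgt; apply/negP => ltAN.
by move/eqP: (A_neq0); apply; apply/momf_annihilator_eq0/(orth_upto_all A_neq0 oA ltAN).
Qed.

Lemma orth_upto_pair_descent k (A B : {poly K}) :
  A != 0 -> (size A <= k.+1)%N -> orth_upto A k.+1 ->
  B != 0 -> (size B <= k.+2)%N -> orth_upto B k.+2 ->
  exists R : {poly K}, [/\ R != 0, (size R <= k)%N & orth_upto R k].
Proof.
move=> A_neq0 leAk oA B_neq0 leBk oB.
have sA : size A = k.+1 by apply/eqP; rewrite eqn_leq leAk orth_upto_size.
have sB : size B = k.+2 by apply/eqP; rewrite eqn_leq leBk orth_upto_size.
have AX_neq0 : momf (A * 'X^(k.+1)) != 0.
  apply/eqP => AX0; have := orth_upto_size A_neq0 (orth_uptoS oA AX0).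
  by rewrite sA ltnn.
exists (B %% A); split; first exact: (modp_orth_upto_neq0 sA oA oB sB AX_neq0).
- by have := ltn_modp B A; rewrite A_neq0 sA ltnS.
- exact: (orth_upto_modp sA oA oB leBk).
Qed.

Lemma no_orth_upto_pair k (A B : {poly K}) :
  A != 0 -> (size A <= k.+1)%N -> orth_upto A k.+1 ->
  B != 0 -> (size B <= k.+2)%N -> orth_upto B k.+2 -> False.
Proof.
elim: k A B => [|k IHk] A B A_neq0 sA oA B_neq0 sB oB.
all: have [R [R_neq0 sR oR]] := orth_upto_pair_descent A_neq0 sA oA B_neq0 sB oB.
- by move: sR; rewrite leqn0 size_poly_eq0 (negPf R_neq0).
- exact: IHk R_neq0 sR oR A_neq0 sA oA.
Qed.

Lemma det_hankel_consecutive k :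
  \det (hankel_mx k) = 0 -> \det (hankel_mx k.+1) = 0 -> False.
Proof.
move=> /det_hankel_eq0[A [A_neq0 sA oA]] /det_hankel_eq0[B [B_neq0 sB oB]].
exact: no_orth_upto_pair A_neq0 sA oA B_neq0 sB oB.
Qed.

End MomentRecurrence.

End MomentFunctional.

Local Open Scope classical_set_scope.

Section TrigonometricMoments.
Context (R : realType).
Notation mu := (@lebesgue_measure R).

Lemma is_derive_continuous (f df : R -> R) :
  (forall x : R, is_derive x 1 f (df x)) -> continuous f.
Proof.
by move=> f' x; apply/differentiable_continuous/derivable1_diffP; have [] := f' x.
Qed.

Lemma Rintegral_is_derive (a b : R) (F f : R -> R) : a < b ->
  (forall x : R, is_derive x 1 F (f x)) -> continuous f ->
  \int[mu]_(x in `[a, b]) f x = F b - F a.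
Proof.
move=> ab F' cf; have cF := is_derive_continuous F'.
rewrite /Rintegral (@continuous_FTC2 _ f F _ _ ab) /=.
- by [].
- exact: continuous_subspaceT.
- split; first by move=> x _; have [] := F' x.
  + exact/cvg_at_right_filter/cF.
  + exact/cvg_at_left_filter/cF.
- by move=> x _; rewrite derive1E; have [] := F' x.
Qed.

Lemma continuous_Rintegrable (a b : R) (f : R -> R) :
  continuous f -> mu.-integrable `[a, b] (EFin \o f).
Proof.
move=> cf; apply: continuous_compact_integrable; first exact: segment_compact.
exact: continuous_subspaceT.
Qed.

Lemma Rintegral_is_derive_lincomb (a b c d : R) (F f g : R -> R) : a < b ->
  continuous f -> continuous g -> (forall x : R, is_derive x 1 F (c * f x + d * g x)) ->
  c * \int[mu]_(x in `[a, b]) f x + d * \int[mu]_(x in `[a, b]) g x = F b - F a.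
Proof.
move=> ab cf cg F'.
have cZ e (h : R -> R) : continuous h -> continuous (fun x => e * h x).
  by move=> ch x; apply: cvgM; [exact: cvg_cst | exact: ch].
rewrite -(Rintegral_is_derive ab F'); last by move=> x; apply: cvgD; apply: cZ.
by rewrite RintegralD ?RintegralZl //; apply: continuous_Rintegrable => //; apply: cZ.
Qed.

Variable w : R.

Lemma is_derive_mulr (x : R) : is_derive x 1 (fun y : R => w * y) w.
Proof.
apply: DeriveDef; first exact: derivableM.
by rewrite deriveMl ?derive_id ?mulr1.
Qed.

Lemma is_derive_exprn k (x : R) : is_derive x 1 (fun y : R => y ^+ k) (k%:R * x ^+ k.-1).
Proof.
apply: DeriveDef; first exact: exprn_derivable.
by rewrite exp_derive scaler1.
Qed.

Definition powcos k (x : R) := x ^+ k * cos (w * x).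
Definition powsin k (x : R) := x ^+ k * sin (w * x).

Lemma is_derive_powcos k (x : R) :
  is_derive x 1 (powcos k) (k%:R * powcos k.-1 x + - w * powsin k x).
Proof.
have dcos := is_derive1_comp (is_derive_cos (w * x)) (is_derive_mulr x).
apply: is_derive_eq (is_deriveM (is_derive_exprn k x) dcos) _.
by rewrite /powcos /powsin /GRing.scale /=; ring.
Qed.

Lemma is_derive_powsin k (x : R) :
  is_derive x 1 (powsin k) (k%:R * powsin k.-1 x + w * powcos k x).
Proof.
have dsin := is_derive1_comp (is_derive_sin (w * x)) (is_derive_mulr x).
apply: is_derive_eq (is_deriveM (is_derive_exprn k x) dsin) _.
by rewrite /powcos /powsin /GRing.scale /=; ring.
Qed.

Lemma moment_rec k :
  Complex 0 w * moment k w + k%:R * moment k.-1 w =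
  Complex (cos w) (sin w) - (-1) ^+ k * Complex (cos w) (- sin w).
Proof.
have lt_N11 : -1 < 1 :> R by rewrite gtrN.
have cC j := is_derive_continuous (is_derive_powcos j).
have cS j := is_derive_continuous (is_derive_powsin j).
have Crec := Rintegral_is_derive_lincomb lt_N11 (cC k.-1) (cS k) (is_derive_powcos k).
have Srec := Rintegral_is_derive_lincomb lt_N11 (cS k.-1) (cC k) (is_derive_powsin k).
move: Crec Srec; rewrite /powcos /powsin mulrN1 cosN sinN expr1n !mul1r mulr1.
rewrite -(rmorph_nat (real_complex R)) -(signr_odd R[i] k) -(signr_odd R k).
case: (odd k); rewrite ?expr0 ?expr1 => Crec Srec.
all: by apply/eqP; rewrite eq_complex /=; apply/andP; split; apply/eqP; lra.
Qed.

End TrigonometricMoments.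

Theorem proposition4 (R : realType) :
  ~ (exists (n : nat) (w : R),
       (1 <= n)%N /\ 0 < w /\ hankel_det n.-1 w = 0 /\ hankel_det n w = 0).
Proof.
move=> [n [w [n_gt0 [w_gt0 [h_pred h]]]]].
have z_neq0 : Complex 0 w != 0 by rewrite eq_complex /= eqxx gt_eqF.
have EE' : Complex (cos w) (sin w) * Complex (cos w) (- sin w) = 1.
  apply/eqP; rewrite eq_complex /=; apply/andP; split; apply/eqP; last by ring.
  by rewrite -(cos2Dsin2 w); ring.
have [E_neq0 E'_neq0] : Complex (cos w) (sin w) != 0 /\ Complex (cos w) (- sin w) != 0.
  by split; apply/eqP => E0; move: EE'; rewrite E0 (mul0r, mulr0) => /eqP; rewrite eq_sym oner_eq0.
apply: (det_hankel_consecutive (moment_rec w) z_neq0 E_neq0 E'_neq0 h_pred).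
by rewrite prednK.
Qed.
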